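(* Let $(X,d^X)$ and $(Y,d^Y)$ be compact metric spaces, let $f$ be a homeomorphism of $X$, let $\mu$ be a Borel measure on $X$ with $\mu(X)>0$, and let $h:X\to Y$ be a homeomorphism. Then (i) $UE^{h^*(\mu)}_{h\circ f\circ h^{-1}}(Y)=h(UE^\mu_f(X))$; (ii) $Sh^{h^*(\mu)}_{h\circ f\circ h^{-1}}(Y)=h(Sh^\mu_f(X))$, where $h^*(\mu)=\mu\circ h^{-1}$ is the Borel measure on $Y$ given by $h^*(\mu)(A)=\mu(h^{-1}(A))$.
   Context: For a homeomorphism $f$ of a compact metric space $(X,d)$ and a Borel measure $\mu$ on $X$: $B(x,\epsilon)=\{y:d(x,y)<\epsilon\}$. For a point $x$, $\mathfrak{c}>0$ and $z\in B(x,\mathfrak{c})$, $\Gamma^{\mathfrak{c}}_f(z)=\{y\in B(x,\mathfrak{c}): d(f^n(y),f^n(z))\le\mathfrak{c}\ \forall n\in\mathbb{Z}\}$. $x$ is a $\mu$-uniformly expansive point of $f$ if there is $\mathfrak{c}>0$ with $\mu(\Gamma^{\mathfrak{c}}_f(z))=0$ for every $z\in B(x,\mathfrak{c})$; $UE^\mu_f(X)$ is the set of such points. A $\delta$-pseudo orbit for $f$ is $\{x_n\}_{n\in\mathbb{Z}}$ with $d(f(x_n),x_{n+1})<\delta$ for all $n$; it is through a set $B$ if $x_0\in B$; it is $\epsilon$-traced if there is $y\in X$ with $d(f^n(y),x_n)<\epsilon$ for all $n$. $x$ is a $\mu$-shadowable point of $f$ if for every $\epsilon>0$ there are $\delta>0$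 and a Borel set $B$ with $\mu(X\setminus B)=0$ such that every $\delta$-pseudo orbit for $f$ through $B\cap B(x,\delta)$ is $\epsilon$-traced by some point of $X$; $Sh^\mu_f(X)$ is the set of such points. *)

From HB Require Import structures.
From mathcomp Require Import all_boot all_order all_algebra.
From mathcomp Require Import all_classical all_reals all_analysis.
Set Implicit Arguments. Unset Strict Implicit. Unset Printing Implicit Defensive.
Import Order.TTheory GRing.Theory Num.Theory.
Local Open Scope classical_set_scope.
Local Open Scope ring_scope.

Section Defs.
Variable R : realType.

Definition is_metric (X : Type) (d : X -> X -> R) : Prop :=
  (forall x y, d x y = 0 <-> x = y) /\
  (forall x y, d x y = d y x) /\
  (forall x y z, d x z <= d x y + d y z).

Definition dball (X : Type) (d : X -> X -> R) (x : X) (e : R) : set X :=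
  [set y | d x y < e].

Definition dopen (X : Type) (d : X -> X -> R) (U : set X) : Prop :=
  forall x, U x -> exists e : R, 0 < e /\ dball d x e `<=` U.

Definition compact_metric (X : Type) (d : X -> X -> R) : Prop :=
  is_metric d /\
  forall F : set (set X), F `<=` dopen d -> setT `<=` \bigcup_(U in F) U ->
    exists G : set (set X), finite_set G /\ G `<=` F /\ setT `<=` \bigcup_(U in G) U.

Definition dcontinuous (X Y : Type) (dX : X -> X -> R) (dY : Y -> Y -> R)
  (g : X -> Y) : Prop :=
  forall x (e : R), 0 < e -> exists del : R, 0 < del /\
    forall y, dX x y < del -> dY (g x) (g y) < e.

Definition homeo (X Y : Type) (dX : X -> X -> R) (dY : Y -> Y -> R)
  (g : X -> Y) (ginv : Y -> X) : Prop :=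
  cancel g ginv /\ cancel ginv g /\ dcontinuous dX dY g /\ dcontinuous dY dX ginv.

Definition borel (X : Type) (d : X -> X -> R) : set (set X) :=
  <<s [set U | dopen d U] >>.

Definition borel_measure (X : Type) (d : X -> X -> R) (mu : set X -> \bar R) : Prop :=
  mu set0 = 0%E /\
  (forall A, borel d A -> (0 <= mu A)%E) /\
  (forall F : nat -> set X, (forall n, borel d (F n)) -> trivIset setT F ->
     (fun n => \sum_(0 <= i < n) mu (F i)) @ \oo --> mu (\bigcup_n F n)).

Definition pushmeasure (X Y : Type) (mu : set X -> \bar R) (h : X -> Y) : set Y -> \bar R :=
  fun A => mu (h @^-1` A).

Definition fz (X : Type) (f finv : X -> X) (n : int) : X -> X :=
  match n with
  | Posz k => iter k f
  | Negz k => iter k.+1 finv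
  end.

Definition Gamma (X : Type) (d : X -> X -> R) (f finv : X -> X) (x : X) (c : R)
  (z : X) : set X :=
  [set y | dball d x c y /\ forall n : int, d (fz f finv n y) (fz f finv n z) <= c].

Definition UE (X : Type) (d : X -> X -> R) (mu : set X -> \bar R) (f finv : X -> X) : set X :=
  [set x | exists c : R, 0 < c /\
     forall z, dball d x c z -> mu (Gamma d f finv x c z) = 0%E].

Definition pseudo_orbit (X : Type) (d : X -> X -> R) (f : X -> X) (del : R)
  (xs : int -> X) : Prop :=
  forall n : int, d (f (xs n)) (xs (n + 1)) < del.

Definition traced (X : Type) (d : X -> X -> R) (f finv : X -> X) (eps : R)
  (xs : int -> X) : Prop :=
  exists y : X, forall n : int, d (fz f finv n y) (xs n) < eps.

Definition Sh (X : Type) (d : X -> X -> R) (mu : set X -> \bar R) (f finv : X -> X) : set X :=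
  [set x | forall eps : R, 0 < eps -> exists del : R, 0 < del /\
     exists B : set X, borel d B /\ mu (~` B) = 0%E /\
       forall xs : int -> X, pseudo_orbit d f del xs ->
         B (xs 0) -> dball d x del (xs 0) -> traced d f finv eps xs].

End Defs.

From HB Require Import structures.
From mathcomp Require Import all_boot all_order all_algebra.
From mathcomp Require Import all_classical all_reals all_analysis.
From mathcomp Require Import lra.
Set Implicit Arguments. Unset Strict Implicit. Unset Printing Implicit Defensive.
Import Order.TTheory GRing.Theory Num.Theory.
Local Open Scope classical_set_scope.
Local Open Scope ring_scope.

(** Since [X] and [Y] are compact, [h] and [hinv] are uniformly continuous,
    and [h] conjugates the integer iterates of [f] to those of
    [h \o f \o hinv].  After shrinking the radius, the [h]-preimage of a
    [Gamma]-set of the conjugate system around [h x] lies in a [Gamma]-set of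
    [f] around [x], hence is [mu]-null when [x] is [mu]-uniformly expansive;
    similarly [hinv] carries pseudo orbits of the conjugate system to pseudo
    orbits of [f], and [h] carries their tracing points back.  This gives the
    inclusions [h (UE) <= UE'] and [h (Sh) <= Sh'], and the reverse ones are
    the same inclusions for [hinv], because [hinv^*(h^*(mu)) = mu]. *)

Section Metric.
Variables (R : realType) (X : Type) (d : X -> X -> R).
Hypothesis d_metric : is_metric d.

Lemma metricxx x : d x x = 0.
Proof. by case: d_metric => d0 _; apply/d0. Qed.

Lemma metricC x y : d x y = d y x.
Proof. by case: d_metric => _ []. Qed.

Lemma metric_triangle x y z : d x z <= d x y + d y z.
Proof. by case: d_metric => _ []. Qed.

Lemma dball_center x e : 0 < e -> dball d x e x.
Proof. by move=> e0; rewrite /dball /= metricxx. Qed.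

Lemma dopen_dball x e : dopen d (dball d x e).
Proof.
rewrite /dball => y /= dxy; exists (e - d x y); split; first by rewrite subr_gt0.
move=> z; rewrite /dball /= => dyz; have := metric_triangle x y z; lra.
Qed.

End Metric.

Section Borel.
Variables (R : realType) (X : Type) (d : X -> X -> R).

Lemma borel_sigma_algebra : sigma_algebra setT (borel d).
Proof. exact: smallest_sigma_algebra. Qed.

Lemma borel0 : borel d set0.
Proof. by case: borel_sigma_algebra. Qed.

Lemma dopen_borel U : dopen d U -> borel d U.
Proof. exact: sub_gen_smallest. Qed.

Lemma borelC U : borel d U -> borel d (~` U).
Proof. by rewrite -setTD; case: borel_sigma_algebra => _ + _; apply. Qed.

Lemma borel_bigcup (F : nat -> set X) :
  (forall n, borel d (F n)) -> borel d (\bigcup_n F n).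
Proof. by case: borel_sigma_algebra => _ _; apply. Qed.

Lemma borelU U V : borel d U -> borel d V -> borel d (U `|` V).
Proof.
by move=> bU bV; rewrite -bigcup2E; apply: borel_bigcup => -[|[|n]] //=; exact: borel0.
Qed.

Lemma borelI U V : borel d U -> borel d V -> borel d (U `&` V).
Proof.
by move=> bU bV; rewrite -[_ `&` _]setCK setCI; apply: borelC; apply: borelU; apply: borelC.
Qed.

Lemma borelD U V : borel d U -> borel d V -> borel d (U `\` V).
Proof. by move=> bU bV; apply: borelI => //; apply: borelC. Qed.

End Borel.

Section Measure.
Variables (R : realType) (X : Type) (d : X -> X -> R) (mu : set X -> \bar R).
Hypothesis mu_borel : borel_measure d mu.

Lemma borel_measure_setU A B : borel d A -> borel d B -> A `&` B = set0 ->
  mu (A `|` B) = (mu A + mu B)%E.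
Proof.
move=> bA bB AB0; case: mu_borel => mu0 [_ mu_sigma].
have := mu_sigma (bigcup2 A B); rewrite bigcup2E -trivIset_bigcup2.
have bAB n : borel d (bigcup2 A B n) by case: n => [|[|n]] //=; exact: borel0.
move=> /(_ bAB AB0) cvAB; apply: (cvg_unique _ cvAB) => //; apply: cvg_near_cst.
near=> n; have n2 : (2 <= n)%N by near: n; exact: nbhs_infty_ge.
by rewrite -(subnK n2) addn2 !big_nat_recl //= big1 ?adde0.
Unshelve. all: by end_near.
Qed.

Lemma borel_measure_le A B : borel d A -> borel d B -> A `<=` B -> (mu A <= mu B)%E.
Proof.
move=> bA bB AB; have [_ [mu_ge0 _]] := mu_borel.
have bBA : borel d (B `\` A) by apply: borelD.
by rewrite -(setDUK AB) borel_measure_setU ?setDIK // leeDl // mu_ge0.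
Qed.

End Measure.

Lemma dcontinuous_comp (R : realType) (X Y Z : Type)
    (dX : X -> X -> R) (dY : Y -> Y -> R) (dZ : Z -> Z -> R) (g : X -> Y) (k : Y -> Z) :
  dcontinuous dX dY g -> dcontinuous dY dZ k -> dcontinuous dX dZ (k \o g).
Proof.
move=> gc kc x e e0; have [a [a0 ka]] := kc (g x) e e0.
by have [b [b0 gb]] := gc x a a0; exists b; split => // y /gb /ka.
Qed.

Section Continuity.
Variables (R : realType) (X Y : Type) (dX : X -> X -> R) (dY : Y -> Y -> R).

Lemma dcontinuous_id : dcontinuous dX dX id.
Proof. by move=> x e e0; exists e. Qed.

Lemma dcontinuous_iter (f : X -> X) k :
  dcontinuous dX dX f -> dcontinuous dX dX (iter k f).
Proof.
move=> fc; elim: k => [|k IHk]; first exact: dcontinuous_id.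
exact: dcontinuous_comp IHk fc.
Qed.

Lemma dcontinuous_fz (f finv : X -> X) n :
  dcontinuous dX dX f -> dcontinuous dX dX finv -> dcontinuous dX dX (fz f finv n).
Proof. by move=> fc finvc; case: n => k; apply: dcontinuous_iter. Qed.

Lemma borel_preimage (g : X -> Y) A :
  dcontinuous dX dY g -> borel dY A -> borel dX (g @^-1` A).
Proof.
move=> gc; apply: (smallest_sub (X := [set A | borel dX (g @^-1` A)])).
  split => /=.
  - by rewrite preimage_set0; exact: borel0.
  - by move=> B bB; rewrite setTD preimage_setC; exact: borelC.
  - by move=> F bF; rewrite preimage_bigcup; exact: borel_bigcup.
move=> U /= oU; apply: dopen_borel => x /oU [e [e0 eU]].
have [del [del0 gdel]] := gc x e e0.
by exists del; split => // y /gdel /eU.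
Qed.

Lemma borel_measure_pushmeasure (mu : set X -> \bar R) (g : X -> Y) :
  dcontinuous dX dY g -> borel_measure dX mu -> borel_measure dY (pushmeasure mu g).
Proof.
move=> gc [mu0 [mu_ge0 mu_sigma]]; rewrite /pushmeasure; split; last split.
- by rewrite preimage_set0.
- by move=> A bA; apply: mu_ge0; exact: borel_preimage.
move=> F bF tF; rewrite preimage_bigcup; apply: mu_sigma.
  by move=> n; exact: borel_preimage.
by move=> i j _ _ [x [Fi Fj]]; apply: tF => //; exists (g x).
Qed.

End Continuity.

Lemma pushmeasureK (R : realType) (X Y : Type) (mu : set X -> \bar R)
    (h : X -> Y) (hinv : Y -> X) :
  cancel h hinv -> pushmeasure (pushmeasure mu h) hinv = mu.
Proof.
move=> hK; apply/funext => A; rewrite /pushmeasure; congr mu.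
by apply/funext => x /=; rewrite hK.
Qed.

Lemma Gamma_borel (R : realType) (X : Type) (d : X -> X -> R) (f finv : X -> X) x c z :
  is_metric d -> dcontinuous d d f -> dcontinuous d d finv ->
  borel d (Gamma d f finv x c z).
Proof.
move=> d_metric fc finvc.
pose far := [set y | exists n, c < d (fz f finv n y) (fz f finv n z)].
have -> : Gamma d f finv x c z = dball d x c `&` ~` far.
  apply/seteqP; split => y /= [xy orbit]; split => //.
    by case=> n; rewrite ltNge orbit.
  by move=> n; rewrite leNgt; apply/negP => cn; apply: orbit; exists n.
apply: borelI; first by apply: dopen_borel; exact: dopen_dball.
apply: borelC; apply: dopen_borel => y [n cn].
have gap : 0 < d (fz f finv n y) (fz f finv n z) - c by rewrite subr_gt0.
have [del [del0 ydel]] := dcontinuous_fz n fc finvc y gap.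
exists del; split => // w /ydel yw; exists n.
have := metric_triangle d_metric (fz f finv n y) (fz f finv n w) (fz f finv n z); lra.
Qed.

Definition duniform_continuous (R : realType) (X Y : Type)
    (dX : X -> X -> R) (dY : Y -> Y -> R) (g : X -> Y) : Prop :=
  forall e : R, 0 < e -> exists del : R, 0 < del /\
    forall a b, dX a b < del -> dY (g a) (g b) < e.

Lemma seq_pos_common_radius (R : realType) (T : eqType) (s : seq T) (P : T -> R -> Prop) :
  (forall t a b, 0 < a -> a <= b -> P t b -> P t a) ->
  (forall t, t \in s -> exists2 a, 0 < a & P t a) ->
  exists2 a, 0 < a & forall t, t \in s -> P t a.
Proof.
move=> P_down; elim: s => [|t s IHs] s_radius; first by exists 1.
have [a a0 Pta] := s_radius t (mem_head t s).
have [b b0 Psb] : exists2 b, 0 < b & forall u, u \in s -> P u b.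
  by apply: IHs => u us; apply: s_radius; rewrite inE us orbT.
have m0 : 0 < Order.min a b by rewrite lt_min a0 b0.
exists (Order.min a b) => // u; rewrite inE => /orP[/eqP-> | us].
  by apply: P_down Pta; rewrite // ge_min lexx.
by apply: P_down (Psb u us); rewrite // ge_min lexx orbT.
Qed.

Lemma compact_duniform_continuous (R : realType) (X Y : Type)
    (dX : X -> X -> R) (dY : Y -> Y -> R) (g : X -> Y) :
  compact_metric dX -> is_metric dY -> dcontinuous dX dY g ->
  duniform_continuous dX dY g.
Proof.
move=> [dX_metric dX_compact] dY_metric gc e e0.
have /choice[r rP] : forall x, exists r : R,
    0 < r /\ forall y, dX x y < r -> dY (g x) (g y) < e / 2.
  by move=> x; apply: gc; lra.
pose balls := [set U | exists x, U = dball dX x (r x / 2)].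
have [G [G_fin [G_balls G_cover]]] : exists G : set (set X),
    finite_set G /\ G `<=` balls /\ setT `<=` \bigcup_(U in G) U.
  apply: dX_compact; first by move=> _ [x ->]; exact: dopen_dball.
  move=> x _; exists (dball dX x (r x / 2)); first by exists x.
  by apply: dball_center => //; have := (rP x).1; lra.
have /finite_seqP[S GS] := G_fin.
have [eta eta0 etaS] : exists2 eta, 0 < eta & forall U, U \in S ->
    exists x, U = dball dX x (r x / 2) /\ eta <= r x / 2.
  apply: seq_pos_common_radius.
    by move=> U a b a0 ab [x [-> bx]]; exists x; split => //; apply: le_trans bx.
  move=> U US; have /G_balls [x ->] : G U by rewrite GS.
  by exists (r x / 2); [have := (rP x).1; lra | exists x].
exists eta; split => // a b ab.
have [U GU Ua] := G_cover a Logic.I.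
have [x [Ux eta_r]] : exists x, U = dball dX x (r x / 2) /\ eta <= r x / 2.
  by apply: etaS; rewrite GS in GU.
move: Ua; rewrite Ux /dball /= => xa; have rx0 := (rP x).1.
have gxa : dY (g x) (g a) < e / 2 by apply: (rP x).2; lra.
have gxb : dY (g x) (g b) < e / 2.
  by apply: (rP x).2; have := metric_triangle dX_metric x a b; lra.
have := metric_triangle dY_metric (g a) (g x) (g b).
rewrite (metricC dY_metric (g a) (g x)); lra.
Qed.

Section Conjugation.
Variables (X Y : Type) (h : X -> Y) (hinv : Y -> X).
Hypotheses (hK : cancel h hinv) (hinvK : cancel hinv h).

Lemma iter_conj (p : X -> X) k : iter k (h \o p \o hinv) =1 h \o iter k p \o hinv.
Proof. by elim: k => [|k IHk] y /=; rewrite ?hinvK // IHk /= hK. Qed.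

Lemma fz_conj (f finv : X -> X) n :
  fz (h \o f \o hinv) (h \o finv \o hinv) n =1 h \o fz f finv n \o hinv.
Proof. by case: n => k; apply: iter_conj. Qed.

Lemma conjK (p : X -> X) : hinv \o (h \o p \o hinv) \o h = p.
Proof. by apply/funext => x /=; rewrite !hK. Qed.

End Conjugation.

Lemma sub_image_cancel (X Y : Type) (h : X -> Y) (hinv : Y -> X) (A : set X) (B : set Y) :
  cancel hinv h -> hinv @` B `<=` A -> B `<=` h @` A.
Proof. by move=> hinvK BA y By; exists (hinv y); [apply: BA; exists y | rewrite hinvK]. Qed.

Section Homeomorphism.
Variables (R : realType) (X Y : Type) (dX : X -> X -> R) (dY : Y -> Y -> R).
Variables (h : X -> Y) (hinv : Y -> X).
Hypothesis h_homeo : homeo dX dY h hinv.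

Lemma homeoV : homeo dY dX hinv h.
Proof. by case: h_homeo => hK [hinvK [hc hinvc]]; do !split. Qed.

Lemma dcontinuous_conj (p : X -> X) :
  dcontinuous dX dX p -> dcontinuous dY dY (h \o p \o hinv).
Proof.
case: h_homeo => _ [_ [hc hinvc]] pc.
exact: dcontinuous_comp (dcontinuous_comp hinvc pc) hc.
Qed.

Hypotheses (dX_compact : compact_metric dX) (dY_compact : compact_metric dY).

Lemma UE_conj_image_sub (f finv : X -> X) (mu : set X -> \bar R) :
  dcontinuous dX dX f -> dcontinuous dX dX finv -> borel_measure dX mu ->
  h @` UE dX mu f finv `<=`
  UE dY (pushmeasure mu h) (h \o f \o hinv) (h \o finv \o hinv).
Proof.
move=> fc finvc mu_borel _ [x [c [c0 UEx]] <-].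
have [hK [hinvK [hc hinvc]]] := h_homeo.
(* Halving the modulus of uniform continuity of [hinv] makes it apply to the
   non-strict orbit bound [<= c'] of [Gamma]. *)
have [c' c'0 hinv_c'] : exists2 c', 0 < c' &
    forall a b, dY a b <= c' -> dX (hinv a) (hinv b) < c.
  have [r [r0 hinv_r]] :=
    compact_duniform_continuous dY_compact dX_compact.1 hinvc c0.
  by exists (r / 2) => [|a b ab]; [lra | apply: hinv_r; lra].
exists c'; split => // z /ltW /hinv_c'; rewrite hK => xz.
have Gamma_sub : h @^-1` Gamma dY (h \o f \o hinv) (h \o finv \o hinv) (h x) c' z
    `<=` Gamma dX f finv x c (hinv z).
  move=> y [/ltW /hinv_c' + orbit]; rewrite !hK => xy; split => // n.
  by have := hinv_c' _ _ (orbit n); rewrite !fz_conj //= !hK => /ltW.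
have [_ [mu_ge0 _]] := mu_borel.
have GammaY_borel :
    borel dY (Gamma dY (h \o f \o hinv) (h \o finv \o hinv) (h x) c' z).
  apply: Gamma_borel; first exact: dY_compact.1.
  - exact: dcontinuous_conj fc.
  - exact: dcontinuous_conj finvc.
have GammaX_borel : borel dX (Gamma dX f finv x c (hinv z)).
  by apply: Gamma_borel; first exact: dX_compact.1.
have GammaY_preimage_borel := borel_preimage hc GammaY_borel.
apply/le_anti; rewrite mu_ge0 // andbT -(UEx _ xz).
exact: borel_measure_le GammaY_preimage_borel GammaX_borel Gamma_sub.
Qed.

Lemma Sh_conj_image_sub (f finv : X -> X) (mu : set X -> \bar R) :
  h @` Sh dX mu f finv `<=`
  Sh dY (pushmeasure mu h) (h \o f \o hinv) (h \o finv \o hinv).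
Proof.
move=> _ [x Shx <-] e e0.
have [hK [hinvK [hc hinvc]]] := h_homeo.
have [e' [e'0 h_e']] := compact_duniform_continuous dX_compact dY_compact.1 hc e0.
have [del [del0 [B [B_borel [muB0 B_traced]]]]] := Shx e' e'0.
have [del' [del'0 hinv_del']] :=
  compact_duniform_continuous dY_compact dX_compact.1 hinvc del0.
exists del'; split => //; exists (hinv @^-1` B).
split; first exact: borel_preimage hinvc B_borel.
split.
  by rewrite /pushmeasure (_ : h @^-1` _ = ~` B) //; apply/funext => y /=; rewrite hK.
move=> ys ys_pseudo Bys0 ys0_near.
have xs_pseudo : pseudo_orbit dX f del (hinv \o ys).
  by move=> n; have := hinv_del' _ _ (ys_pseudo n); rewrite /= hK.
have xs0_near : dball dX x del (hinv (ys 0)).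
  by have := hinv_del' _ _ ys0_near; rewrite hK.
have [y y_traces] := B_traced _ xs_pseudo Bys0 xs0_near.
exists (h y) => n; rewrite fz_conj //= hK.
by have := h_e' _ _ (y_traces n); rewrite /= hinvK.
Qed.

End Homeomorphism.

Unset Implicit Arguments.

Theorem proposition3p5 (R : realType) (X Y : Type)
  (dX : X -> X -> R) (dY : Y -> Y -> R)
  (f finv : X -> X) (mu : set X -> \bar R) (h : X -> Y) (hinv : Y -> X) :
  compact_metric dX -> compact_metric dY ->
  homeo dX dX f finv ->
  borel_measure dX mu -> (0 < mu setT)%E ->
  homeo dX dY h hinv ->
  UE dY (pushmeasure mu h) (h \o f \o hinv) (h \o finv \o hinv)
    = h @` UE dX mu f finv /\
  Sh dY (pushmeasure mu h) (h \o f \o hinv) (h \o finv \o hinv)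
    = h @` Sh dX mu f finv.
Proof.
move=> dX_compact dY_compact [_ [_ [fc finvc]]] mu_borel _ h_homeo.
have [hK [hinvK [hc _]]] := h_homeo.
have hinv_homeo := homeoV h_homeo.
have push_borel := borel_measure_pushmeasure hc mu_borel.
split; apply/seteqP; split.
- apply: sub_image_cancel hinvK _.
  have := UE_conj_image_sub hinv_homeo dY_compact dX_compact
    (dcontinuous_conj h_homeo fc) (dcontinuous_conj h_homeo finvc) push_borel.
  by rewrite pushmeasureK // !conjK.
- exact: UE_conj_image_sub.
- apply: sub_image_cancel hinvK _.
  have := Sh_conj_image_sub hinv_homeo dY_compact dX_compact
    (f := h \o f \o hinv) (finv := h \o finv \o hinv) (mu := pushmeasure mu h).
  by rewrite pushmeasureK // !conjK.
- exact: Sh_conj_image_sub.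
Qed.
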